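(* Let $\mathfrak{g}$ be a semi-simple real Lie algebra with a faithful finite dimensional real representation $\mathfrak{g}\to\mathrm{End}(W)$, and suppose there is a symmetric bilinear $\mathfrak{g}$-equivariant map $\wedge:W\times W\to W^*$ which does not vanish identically on any $2$-dimensional linear subspace of $W$. Then $\mathfrak{g}$ does not contain any subalgebra isomorphic to $\mathfrak{sl}_2(\mathbf{R})\oplus\mathfrak{sl}_2(\mathbf{R})$.
   Context: $W^*$ is the dual representation; equivariance of $\wedge$ means $X\cdot(a\wedge b)=(X\cdot a)\wedge b+a\wedge(X\cdot b)$ for $X\in\mathfrak{g}$. *)

From HB Require Import structures.
From mathcomp Require Import all_boot all_order all_algebra.
Set Implicit Arguments. Unset Strict Implicit. Unset Printing Implicit Defensive.
Import Order.TTheory GRing.Theory Num.Theory.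
Local Open Scope ring_scope.

Definition lie_bracket (K : fieldType) (V : vectType K) (br : V -> V -> V) : Prop :=
  [/\ (forall (a : K) (x y z : V), br (a *: x + y) z = a *: br x z + br y z),
      (forall (a : K) (x y z : V), br z (a *: x + y) = a *: br z x + br z y),
      (forall x : V, br x x = 0) &
      (forall x y z : V, br x (br y z) + br y (br z x) + br z (br x y) = 0)].

(* [U, U'] : the span of all brackets [u, u'] with u in U, u' in U'
   (by bilinearity, spanned by the brackets of basis vectors). *)
Definition brv (K : fieldType) (V : vectType K) (br : V -> V -> V)
    (U U' : {vspace V}) : {vspace V} :=
  (<<[seq br u u' | u <- vbasis U, u' <- vbasis U']>>)%VS.

Definition lie_ideal (K : fieldType) (V : vectType K) (br : V -> V -> V)
    (I : {vspace V}) : Prop :=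
  (brv br fullv I <= I)%VS.

Definition derived (K : fieldType) (V : vectType K) (br : V -> V -> V)
    (k : nat) (I : {vspace V}) : {vspace V} :=
  iter k (fun U => brv br U U) I.

Definition lie_solvable (K : fieldType) (V : vectType K) (br : V -> V -> V)
    (I : {vspace V}) : Prop :=
  exists k, derived br k I = 0%VS.

Definition lie_semisimple (K : fieldType) (V : vectType K) (br : V -> V -> V) : Prop :=
  forall I : {vspace V}, lie_ideal br I -> lie_solvable br I -> I = 0%VS.

Definition lie_rep (K : fieldType) (V : vectType K) (br : V -> V -> V) (n : nat)
    (rho : V -> 'M[K]_n) : Prop :=
  [/\ (forall (a : K) (x y : V), rho (a *: x + y) = a *: rho x + rho y) &
      (forall x y : V, rho (br x y) = rho x *m rho y - rho y *m rho x)].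

Definition faithful (K : fieldType) (V : vectType K) (n : nat)
    (rho : V -> 'M[K]_n) : Prop := injective rho.

(* W^* is represented by row vectors 'rV_n, paired with W via f *m w;
   the dual action is X . f = - f *m rho X (so that (X.f)(w) = - f(X.w)). *)
Definition dual_act (K : fieldType) (n : nat) (M : 'M[K]_n) (f : 'rV[K]_n) : 'rV[K]_n :=
  - (f *m M).

Definition sym_equiv_wedge (K : fieldType) (V : vectType K) (n : nat)
    (rho : V -> 'M[K]_n) (wedge : 'cV[K]_n -> 'cV[K]_n -> 'rV[K]_n) : Prop :=
  [/\ (forall (c : K) (a a' b : 'cV[K]_n), wedge (c *: a + a') b = c *: wedge a b + wedge a' b),
      (forall a b : 'cV[K]_n, wedge a b = wedge b a) &
      (forall (X : V) (a b : 'cV[K]_n),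
         dual_act (rho X) (wedge a b) = wedge (rho X *m a) b + wedge a (rho X *m b))].

Definition nonvanishing_on_planes (K : fieldType) (n : nat)
    (wedge : 'cV[K]_n -> 'cV[K]_n -> 'rV[K]_n) : Prop :=
  forall U : {vspace 'cV[K]_n}, \dim U = 2%N ->
    exists a b, [/\ a \in U, b \in U & wedge a b != 0].

Definition sl2 (K : fieldType) (A : 'M[K]_2) : bool := \tr A == 0.

Definition mxcomm (K : fieldType) (A B : 'M[K]_2) : 'M[K]_2 := A *m B - B *m A.

(* (A, C) |-> phi1 A + phi2 C is an injective Lie algebra homomorphism
   sl_2(K) (+) sl_2(K) -> V, i.e. its image is a subalgebra of V isomorphic
   to sl_2(K) (+) sl_2(K). *)
Definition sl2sl2_embedding (K : fieldType) (V : vectType K) (br : V -> V -> V)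
    (phi1 phi2 : 'M[K]_2 -> V) : Prop :=
  [/\ (forall (a : K) (A B : 'M[K]_2), phi1 (a *: A + B) = a *: phi1 A + phi1 B),
      (forall (a : K) (A B : 'M[K]_2), phi2 (a *: A + B) = a *: phi2 A + phi2 B),
      (forall A B C D : 'M[K]_2, sl2 A -> sl2 B -> sl2 C -> sl2 D ->
         phi1 (mxcomm A B) + phi2 (mxcomm C D) = br (phi1 A + phi2 C) (phi1 B + phi2 D)) &
      (forall A C : 'M[K]_2, sl2 A -> sl2 C -> phi1 A + phi2 C = 0 -> A = 0 /\ C = 0)].

Definition has_sl2sl2_subalgebra (K : fieldType) (V : vectType K) (br : V -> V -> V) : Prop :=
  exists phi1 phi2 : 'M[K]_2 -> V, sl2sl2_embedding br phi1 phi2.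

From HB Require Import structures.
From mathcomp Require Import all_boot all_order all_algebra zify.
Import Order.TTheory GRing.Theory Num.Theory.
Set Implicit Arguments. Unset Strict Implicit. Unset Printing Implicit Defensive.
Local Open Scope ring_scope.

(* Then g contains no copy of sl_2 (+) sl_2.

   The two factors give commuting sl_2-triples (e_i, h_i, f_i) of
   matrices with f_i != 0.  For each i, f_i is nilpotent; let d_i > 0 be such
   that f_i^(d_i) is its last nonzero power.  Vectors in the image of
   f_i^(d_i) have h_i-weight -d_i, so wedge of two of them has weight 2 d_i
   in W^*; it is moreover a highest-weight vector there, and weights of
   highest-weight vectors are bounded by d_i, so wedge vanishes on that
   image, which must therefore be a line K a_i.  Commuting nilpotent
   matrices kill such a line, so h_2 a_1 = 0 while h_2 a_2 = -d_2 a_2: a_1,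
   a_2 are free.  Finally wedge a_1 a_2 has h_2-weight d_2 != 0 but is also
   killed by h_2 (it factors through f_1^(d_1), which h_2 * f_1^(d_1) = 0
   annihilates), so wedge vanishes on the plane spanned by a_1 and a_2. *)

Section CombinationLinear.
Variables (R : pzRingType) (U W : lmodType R) (g : U -> W).
Hypothesis g_comb : forall a x y, g (a *: x + y) = a *: g x + g y.

Lemma comb_lin0 : g 0 = 0.
Proof.
have g00 := g_comb 1 0 0; rewrite !scale1r addr0 in g00.
by apply: (addIr (g 0)); rewrite add0r -g00.
Qed.

Lemma comb_linZ a x : g (a *: x) = a *: g x.
Proof. by rewrite -[a *: x]addr0 g_comb comb_lin0 addr0. Qed.

Lemma comb_linD x y : g (x + y) = g x + g y.
Proof. by rewrite -[x]scale1r g_comb !scale1r. Qed.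

End CombinationLinear.

Lemma mulmx_mulr (R : pzRingType) n m (A B : 'M[R]_n.+1) (u : 'M[R]_(n.+1, m)) :
  (A * B) *m u = A *m (B *m u).
Proof. by rewrite -mulmxE mulmxA. Qed.

Lemma mx_neq0_vec (R : pzRingType) m n (A : 'M[R]_(m, n)) :
  A != 0 -> exists v : 'cV[R]_n, A *m v != 0.
Proof.
move=> A0; pose Acol j : 'cV[R]_m := A *m (delta_mx j 0 : 'cV[R]_n).
case: (pickP (fun j => Acol j != 0)) => [j Aj | Acol0]; first by exists (delta_mx j 0).
case/eqP: A0; apply/matrixP => i j; move/negbFE/eqP/matrixP/(_ i 0): (Acol0 j).
by rewrite /Acol -colE !mxE.
Qed.

Lemma trmxX (R : comPzRingType) n (A : 'M[R]_n.+1) k : (A ^+ k)^T = A^T ^+ k.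
Proof.
elim: k => [|k IHk]; first by rewrite !expr0 trmx1.
by rewrite exprS exprSr -!mulmxE trmx_mul IHk.
Qed.

Lemma free_eigen2 (R : fieldType) n (M : 'M[R]_n) (a b : 'cV[R]_n) (x y : R) :
  M *m a = x *: a -> M *m b = y *: b -> x != y -> a != 0 -> b != 0 ->
  free [:: a; b].
Proof.
move=> Ma Mb xy a0 b0; rewrite free_cons seq1_free b0 andbT span_seq1.
apply/vlineP => -[c def_a]; move: Ma; rewrite def_a -scalemxAr Mb !scalerA.
move/eqP; rewrite eq_sym -subr_eq0 -scalerBl scaler_eq0 (negbTE b0) orbF.
rewrite [c * y]mulrC -mulrBl mulf_eq0 subr_eq0 (negbTE xy) /= => /eqP c0.
by move: a0; rewrite def_a c0 scale0r eqxx.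
Qed.

Lemma nilpotent_index (T : pzRingType) (x : T) N :
  x ^+ N = 0 -> x != 0 -> exists d, [/\ (0 < d)%N, x ^+ d.+1 = 0 & x ^+ d != 0].
Proof.
move=> xN x0; have exP : exists j, x ^+ j == 0 by exists N; rewrite xN.
case: (ex_minnP exP) => j /eqP xj minj; case: j xj minj => [|[|d]] xj minj.
- by move: x0; rewrite -[x]mulr1 -(expr0 x) xj mulr0 eqxx.
- by move: x0; rewrite -(expr1 x) xj eqxx.
by exists d.+1; split => //; apply/negP => /minj; rewrite ltnn.
Qed.

(* If a nilpotent M commutes with P and the image of P is the line through
   a = P v0 != 0, then M kills that image: M acts on the line by a scalar,
   which must be nilpotent, hence zero. *)
Lemma nilpotent_comm_kills_line (R : fieldType) n (M P : 'M[R]_n.+1)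
    (v0 : 'cV[R]_n.+1) N :
  M * P = P * M -> M ^+ N = 0 -> P *m v0 != 0 ->
  (forall v, exists c, P *m v = c *: (P *m v0)) -> M * P = 0.
Proof.
move=> MP MN a0 lineP; set a := P *m v0 in a0 lineP.
have [c Ma] : exists c, M *m a = c *: a.
  by rewrite /a -mulmx_mulr MP mulmx_mulr; exact: lineP.
have MXa k : M ^+ k *m a = c ^+ k *: a.
  elim: k => [|k IHk]; first by rewrite !expr0 mul1mx scale1r.
  by rewrite exprS mulmx_mulr IHk -scalemxAr Ma scalerA -exprSr.
have c0 : c = 0.
  move/eqP: (MXa N); rewrite MN mul0mx eq_sym scaler_eq0 (negbTE a0) orbF.
  by rewrite expf_eq0 => /andP [_ /eqP].
apply/eqP; apply: contraT => /mx_neq0_vec [v]; rewrite mulmx_mulr.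
by have [c' ->] := lineP v; rewrite -scalemxAr Ma c0 scale0r scaler0 eqxx.
Qed.

Section Sl2Triple.
Variables (R : numFieldType) (n : nat).
Implicit Types (e h f : 'M[R]_n.+1) (u : 'cV[R]_n.+1).

Lemma horner_mx_poly e m (c : nat -> R) :
  horner_mx e (\poly_(i < m) c i) = \sum_(i < m) c i *: e ^+ i.
Proof.
rewrite poly_def rmorph_sum /=; apply: eq_bigr => i _.
by rewrite horner_mxZ rmorphXn /= horner_mx_X.
Qed.

(* If the minimal polynomial p of e (of degree d) is such that X p'(e) = 0,
   then X p' = d p by minimality, which forces p = X^d: e is nilpotent. *)
Lemma nilpotent_of_euler_root e :
  let p := mxminpoly e in let d := degree_mxminpoly e in
  horner_mx e (\poly_(i < d.+1) (i%:R * p`_i)) = 0 -> e ^+ d = 0.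
Proof.
move=> p d; set q := \poly_(i < d.+1) _ => qe0.
have size_p : size p = d.+1 by rewrite size_mxminpoly.
have pE : horner_mx e p = \sum_(i < d.+1) p`_i *: e ^+ i.
  by rewrite -{1}(coefK p) size_p horner_mx_poly.
set r := d%:R *: p - q.
have r0 : r = 0.
  apply/eqP; apply: contraT => r_neq0.
  have re0 : horner_mx e r = 0.
    by rewrite raddfB /= horner_mxZ mx_root_minpoly qe0 scaler0 subrr.
  suff : (size r <= d)%N.
    by move/(leq_trans (dvdp_leq r_neq0 (mxminpoly_min re0))); rewrite size_p ltnn.
  apply/leq_sizeP => j dj; rewrite /r coefB coefZ coef_poly.
  case: ltnP => jd.
    suff -> : j = d by rewrite subrr.
    by apply/eqP; rewrite eqn_leq dj andbT.
  by rewrite nth_default ?size_p // mulr0 subrr.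
have p_low i : (i < d)%N -> p`_i = 0.
  move=> id; move/(congr1 (fun s : {poly R} => s`_i)): r0.
  rewrite /r coefB coefZ coef_poly coef0 ltnS ltnW // -mulrBl => /eqP.
  by rewrite mulf_eq0 subr_eq0 eqr_nat gtn_eqF //= => /eqP.
rewrite -(mx_root_minpoly e) -/p pE big_ord_recr /= big1 ?add0r => [|i _].
  by move/monicP: (mxminpoly_monic e); rewrite /lead_coef size_p => ->; rewrite scale1r.
by rewrite p_low ?scale0r.
Qed.

Lemma commutator_exprX h e (c : R) : h * e - e * h = c *: e ->
  forall k, h * e ^+ k - e ^+ k * h = (c * k%:R) *: e ^+ k.
Proof.
move=> he k; elim: k => [|k IHk]; first by rewrite expr0 mulr1 mul1r subrr mulr0 scale0r.
have -> : h * e ^+ k.+1 - e ^+ k.+1 * h =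
    (h * e ^+ k - e ^+ k * h) * e + e ^+ k * (h * e - e * h).
  by rewrite exprSr mulrBl mulrBr !mulrA addrA subrK.
by rewrite IHk he -scalerAl -scalerAr -exprSr -scalerDl !mulr_natr mulrSr.
Qed.

(* An eigenvector of ad h for a nonzero eigenvalue is nilpotent: applying
   ad h to p(e) = 0 (p the minimal polynomial) gives X p'(e) = 0. *)
Lemma nilpotent_of_commutator h e (c : R) :
  c != 0 -> h * e - e * h = c *: e -> exists N, e ^+ N = 0.
Proof.
move=> c0 he; exists (degree_mxminpoly e); apply: nilpotent_of_euler_root.
set p := mxminpoly e; set Xdp := \poly_(i < _) _.
apply: (scalerI c0); rewrite scaler0.
have <- : h * horner_mx e p - horner_mx e p * h = 0.
  by rewrite mx_root_minpoly mulr0 mul0r subrr.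
rewrite -{1 2}(coefK p) size_mxminpoly !horner_mx_poly.
rewrite mulr_sumr mulr_suml -sumrB scaler_sumr; apply: eq_bigr => i _.
rewrite -scalerAr -scalerAl -scalerBr (commutator_exprX he) !scalerA.
by rewrite mulrA mulrC.
Qed.

Definition sl2_triple e h f :=
  [/\ h * e - e * h = 2%:R *: e, h * f - f * h = - (2%:R *: f) & e * f - f * e = h].

Lemma sl2_triple_opp e h f : sl2_triple e h f -> sl2_triple f (- h) e.
Proof.
case=> he hf ef; split.
- by rewrite mulNr mulrN opprK addrC -opprB hf opprK.
- by rewrite mulNr mulrN opprK addrC -opprB he.
- by rewrite -opprB ef.
Qed.

(* Transposition turns an sl_2-triple (e, h, f) into (f^T, h^T, e^T); this is
   the passage from W to the dual representation. *)
Lemma sl2_triple_trmx e h f : sl2_triple e h f -> sl2_triple f^T h^T e^T.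
Proof.
have trM (A B : 'M[R]_n.+1) : (A * B)^T = B^T * A^T by rewrite -!mulmxE trmx_mul.
case=> he hf ef; split.
- by rewrite -!trM -linearB /= -opprB hf opprK linearZ.
- by rewrite -!trM -linearB /= -opprB he linearN linearZ.
- by rewrite -!trM -linearB /= ef.
Qed.

Lemma sl2_triple_hfX e h f k : sl2_triple e h f ->
  h * f ^+ k = f ^+ k * h - (2 * k)%:R *: f ^+ k.
Proof.
case=> _ hf _; have hf' : h * f = f * h - 2%:R *: f by rewrite -hf addrC subrK.
elim: k => [|k IHk]; first by rewrite !expr0 mulr1 mul1r muln0 scale0r subr0.
rewrite exprSr mulrA IHk mulrBl -!scalerAl -[f ^+ k * h * f]mulrA hf' mulrBr.
by rewrite -scalerAr mulrA mulnS natrD [in RHS]scalerDl opprD addrA.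
Qed.

Lemma sl2_triple_efX e h f k : sl2_triple e h f ->
  e * f ^+ k.+1 = f ^+ k.+1 * e + k.+1%:R *: (f ^+ k * h) - (k * k.+1)%:R *: f ^+ k.
Proof.
move=> T; have [_ hf ef] := T.
have hf' : h * f = f * h - 2%:R *: f by rewrite -hf addrC subrK.
have ef' : e * f = f * e + h by rewrite -ef addrC subrK.
elim: k => [|k IHk]; first by rewrite expr1 expr0 mul1r mul0n scale0r subr0 scale1r.
rewrite (exprSr f k.+1) mulrA IHk !mulrBl !mulrDl -!scalerAl -!mulrA ef' hf'.
rewrite mulrDr mulrBr -scalerAr !mulrA -!exprSr scalerBr scalerA -!addrA.
congr (_ + _); rewrite addrA -{1}[f ^+ k.+1 * h]scale1r -scalerDl -mulrS.
congr (_ + _); rewrite -opprD -scalerDl -!natrM -natrD.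
by congr (- (_%:R *: _)); lia.
Qed.

Lemma sl2_triple_top_weight e h f d : sl2_triple e h f -> f ^+ d.+1 = 0 ->
  h * f ^+ d = - (d%:R *: f ^+ d).
Proof.
move=> T fd0.
have fdh : f ^+ d * h = d%:R *: f ^+ d.
  have := sl2_triple_efX d T; rewrite fd0 mulr0 mul0r add0r => /eqP.
  rewrite eq_sym subr_eq0 natrM mulrC -scalerA => /eqP.
  by apply: scalerI; rewrite pnatr_eq0.
rewrite (sl2_triple_hfX _ T) fdh mulnC natrM -scalerA scalerA mulrC -scalerA.
by rewrite (scaler_nat 2) mulr2n opprD addrA subrr add0r.
Qed.

(* A highest-weight vector u (e u = 0, h u = mu u) has weight k = the
   length of its f-string minus one; in particular mu is a natural number
   smaller than any N with f^N = 0. *)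
Lemma highest_weight_nat e h f N u (mu : R) :
  sl2_triple e h f -> f ^+ N = 0 -> u != 0 -> e *m u = 0 -> h *m u = mu *: u ->
  exists2 k, (k < N)%N & mu = k%:R.
Proof.
move=> T fN0 u0 eu hu.
have exP : exists j, f ^+ j *m u == 0 by exists N; rewrite fN0 mul0mx.
case: (ex_minnP exP) => j /eqP fku minj.
case: j fku minj => [|k] fku minj.
  by move: fku u0; rewrite expr0 mul1mx => ->; rewrite eqxx.
have fku0 : f ^+ k *m u != 0 by apply/negP => /minj; rewrite ltnn.
exists k; first by apply: minj; rewrite fN0 mul0mx.
move/(congr1 (fun M => M *m u)): (sl2_triple_efX k T).
rewrite mulmx_mulr fku mulmx0 mulmxBl mulmxDl mulmx_mulr eu mulmx0 add0r.
rewrite -!scalemxAl mulmx_mulr hu -scalemxAr scalerA -scalerBl => /esym/eqP.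
rewrite scaler_eq0 (negbTE fku0) orbF (mulnC k) natrM -mulrBr mulf_eq0.
by rewrite pnatr_eq0 /= subr_eq0 => /eqP.
Qed.

(* The nilpotency indices of e and f bound each other: the top of the
   e-string through a vector v with e^m v != 0 has weight m. *)
Lemma sl2_triple_index_le e h f m N : sl2_triple e h f ->
  e ^+ m.+1 = 0 -> e ^+ m != 0 -> f ^+ N = 0 -> (m < N)%N.
Proof.
move=> T em0 em f0; have [v emv] := mx_neq0_vec em.
have hem : h * e ^+ m = m%:R *: e ^+ m.
  by rewrite -[h]opprK mulNr (sl2_triple_top_weight (sl2_triple_opp T) em0) opprK.
have eu : e *m (e ^+ m *m v) = 0 by rewrite -mulmx_mulr -exprS em0 mul0mx.
have hu : h *m (e ^+ m *m v) = m%:R *: (e ^+ m *m v).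
  by rewrite -mulmx_mulr hem scalemxAl.
have [k kN /eqP] := highest_weight_nat T f0 emv eu hu.
by rewrite eqr_nat => /eqP ->.
Qed.

Lemma sl2_triple_nilpotent e h f : sl2_triple e h f -> f != 0 ->
  exists d, [/\ (0 < d)%N, f ^+ d.+1 = 0, f ^+ d != 0 & e ^+ d.+1 = 0].
Proof.
move=> T f0; have [he _ _] := T; have [hf _ _] := sl2_triple_opp T.
have two0 : 2%:R != 0 :> R by rewrite pnatr_eq0.
have [M fM] := nilpotent_of_commutator two0 hf.
have [d [d0 fd0 fd]] := nilpotent_index fM f0.
exists d; split => //; have [Me eM] := nilpotent_of_commutator two0 he.
have exP : exists j, e ^+ j == 0 by exists Me; rewrite eM.
case: (ex_minnP exP) => -[|m] /eqP em0 minj.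
  by move: f0; rewrite -[f]mulr1 -(expr0 e) em0 mulr0 eqxx.
have em : e ^+ m != 0 by apply/negP => /minj; rewrite ltnn.
have := sl2_triple_index_le T em0 em fd0 => md.
by rewrite -(subnKC md) exprD em0 mul0r.
Qed.

End Sl2Triple.

(* If P has rank one and commutes with e and f of an sl_2-triple, then P is
   killed by e and f (both nilpotent), hence by h = [e, f]. *)
Lemma sl2_triple_kills_line (R : numFieldType) n (e h f P : 'M[R]_n.+1) (v0 : 'cV[R]_n.+1) :
  sl2_triple e h f -> e * P = P * e -> f * P = P * f -> P *m v0 != 0 ->
  (forall v, exists c, P *m v = c *: (P *m v0)) -> h * P = 0.
Proof.
move=> T eP fP a0 lineP; have [he _ ef] := T; have [hf _ _] := sl2_triple_opp T.
have two0 : 2%:R != 0 :> R by rewrite pnatr_eq0.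
have [Ne eN] := nilpotent_of_commutator two0 he.
have [Nf fN] := nilpotent_of_commutator two0 hf.
have eP0 := nilpotent_comm_kills_line eP eN a0 lineP.
have fP0 := nilpotent_comm_kills_line fP fN a0 lineP.
by rewrite -ef mulrBl -!mulrA eP0 fP0 !mulr0 subrr.
Qed.

Section EquivariantWedge.
Variables (R : numFieldType) (n : nat).
Variable wedge : 'cV[R]_n.+1 -> 'cV[R]_n.+1 -> 'rV[R]_n.+1.
Hypothesis wedge_lin : forall (c : R) a a' b,
  wedge (c *: a + a') b = c *: wedge a b + wedge a' b.
Hypothesis wedge_sym : forall a b, wedge a b = wedge b a.
Implicit Types (a b v : 'cV[R]_n.+1) (e h f M : 'M[R]_n.+1).

Lemma wedge0l b : wedge 0 b = 0.
Proof. exact: (comb_lin0 (fun c a a' => wedge_lin c a a' b)). Qed.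

Lemma wedgeDl a a' b : wedge (a + a') b = wedge a b + wedge a' b.
Proof. exact: (comb_linD (fun c a a' => wedge_lin c a a' b)). Qed.

Lemma wedgeZl c a b : wedge (c *: a) b = c *: wedge a b.
Proof. exact: (comb_linZ (fun c a a' => wedge_lin c a a' b)). Qed.

Lemma wedge0r b : wedge b 0 = 0.
Proof. by rewrite wedge_sym wedge0l. Qed.

Lemma wedgeDr a a' b : wedge b (a + a') = wedge b a + wedge b a'.
Proof. by rewrite !(wedge_sym b) wedgeDl. Qed.

Lemma wedgeZr c a b : wedge b (c *: a) = c *: wedge b a.
Proof. by rewrite !(wedge_sym b) wedgeZl. Qed.

Definition wedge_equivariant M :=
  forall a b, - (wedge a b *m M) = wedge (M *m a) b + wedge a (M *m b).

Lemma wedge_weight M a b (x y : R) : wedge_equivariant M ->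
  M *m a = x *: a -> M *m b = y *: b -> wedge a b *m M = - (x + y) *: wedge a b.
Proof.
move=> EM Ma Mb; apply: oppr_inj.
by rewrite EM Ma Mb wedgeZl wedgeZr -scalerDl scaleNr opprK.
Qed.

Lemma wedge_exprl f b : wedge_equivariant f -> f *m b = 0 ->
  forall k a, wedge (f ^+ k *m a) b = (-1) ^+ k *: (wedge a b *m f ^+ k).
Proof.
move=> Ef fb k; elim: k => [|k IHk] a; first by rewrite !expr0 mul1mx mulmx1 scale1r.
have wfa : wedge (f *m a) b = - (wedge a b *m f) by rewrite Ef fb wedge0r addr0.
rewrite [in LHS]exprSr mulmx_mulr IHk wfa mulNmx scalerN exprS mulN1r scaleNr.
by rewrite [in RHS]exprS -mulmxE mulmxA.
Qed.


(* For an sl_2-triple with f^(d+1) = e^(d+1) = 0 and d > 0, wedge vanishes on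
   the image of f^d: the wedge of two vectors of weight -d would be a
   highest-weight vector of weight 2d > d in the dual, which is impossible. *)
Lemma wedge_top_vanish e h f d : sl2_triple e h f ->
  wedge_equivariant h -> wedge_equivariant f ->
  f ^+ d.+1 = 0 -> e ^+ d.+1 = 0 -> (0 < d)%N ->
  forall v v', wedge (f ^+ d *m v) (f ^+ d *m v') = 0.
Proof.
move=> T Eh Ef fd0 ed0 d0 v v'.
have hx (z : 'cV[R]_n.+1) : h *m (f ^+ d *m z) = - d%:R *: (f ^+ d *m z).
  by rewrite -mulmx_mulr (sl2_triple_top_weight T fd0) scaleNr mulNmx scalemxAl.
have fx (z : 'cV[R]_n.+1) : f *m (f ^+ d *m z) = 0 *: (f ^+ d *m z).
  by rewrite scale0r -mulmx_mulr -exprS fd0 mul0mx.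
set w := wedge _ _.
have wh : w *m h = (d + d)%:R *: w.
  by rewrite (wedge_weight Eh (hx v) (hx v')) -opprD opprK natrD.
have wf : w *m f = 0 by rewrite (wedge_weight Ef (fx v) (fx v')) addr0 oppr0 scale0r.
apply/eqP; apply: contraT => w0.
have u0 : w^T != 0 by apply: contra w0 => /eqP u0; rewrite -[w]trmxK u0 linear0.
have eu : f^T *m w^T = 0 by rewrite -trmx_mul wf linear0.
have hu : h^T *m w^T = (d + d)%:R *: w^T by rewrite -trmx_mul wh linearZ.
have eT0 : e^T ^+ d.+1 = 0 by rewrite -trmxX ed0 linear0.
have [k kd /eqP] := highest_weight_nat (sl2_triple_trmx T) eT0 u0 eu hu.
by rewrite eqr_nat => /eqP dk; lia.
Qed.

Hypothesis wedge_nv : nonvanishing_on_planes wedge.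

Lemma wedge_nonvanishing_free x y : free [:: x; y] ->
  wedge x x = 0 -> wedge x y = 0 -> wedge y y = 0 -> False.
Proof.
move=> xy xx0 xy0 yy0; have dim2 : \dim <<[:: x; y]>>%VS = 2%N by apply/eqP.
have [a [b [aU bU]]] := wedge_nv dim2.
have inU z : z \in <<[:: x; y]>>%VS -> exists c c', z = c *: x + c' *: y.
  rewrite span_cons span_seq1 => /memv_addP [u /vlineP [c ->]] [u' /vlineP [c' ->] ->].
  by exists c, c'.
have [c [c' ->]] := inU _ aU; have [k [k' ->]] := inU _ bU.
rewrite !(wedgeDl, wedgeZl, wedgeDr, wedgeZr) xx0 xy0 (wedge_sym y) xy0 yy0.
by rewrite !(scaler0, addr0) eqxx.
Qed.

Lemma sl2_top_line e h f : sl2_triple e h f -> f != 0 ->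
  wedge_equivariant h -> wedge_equivariant f ->
  exists d (v0 : 'cV[R]_n.+1), [/\ (0 < d)%N, f ^+ d.+1 = 0, f ^+ d *m v0 != 0,
    forall v, exists c, f ^+ d *m v = c *: (f ^+ d *m v0) &
    forall v v', wedge (f ^+ d *m v) (f ^+ d *m v') = 0].
Proof.
move=> T f0 Eh Ef; have [d [d0 fd0 fd ed0]] := sl2_triple_nilpotent T f0.
have van := wedge_top_vanish T Eh Ef fd0 ed0 d0.
have [v0 a0] := mx_neq0_vec fd.
exists d, v0; split => // v.
case: (boolP (free [:: f ^+ d *m v; f ^+ d *m v0])) => [fr|].
  by case: (wedge_nonvanishing_free fr (van _ _) (van _ _) (van _ _)).
by rewrite free_cons seq1_free a0 andbT span_seq1 negbK => /vlineP.
Qed.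

(* Here a_i spans
   the image of the last nonzero power P_i of f_i; a1 and a2 have distinct
   h2-weights 0 and -d2, and wedge a1 a2 has h2-weight d2 != 0 while also
   being a multiple of something killed by P1 h2 = 0. *)
Lemma no_commuting_sl2_triples e1 h1 f1 e2 h2 f2 :
  sl2_triple e1 h1 f1 -> sl2_triple e2 h2 f2 -> f1 != 0 -> f2 != 0 ->
  wedge_equivariant h1 -> wedge_equivariant f1 ->
  wedge_equivariant h2 -> wedge_equivariant f2 ->
  e2 * f1 = f1 * e2 -> h2 * f1 = f1 * h2 -> f2 * f1 = f1 * f2 -> False.
Proof.
move=> T1 T2 f1n0 f2n0 Eh1 Ef1 Eh2 Ef2 ce ch cf.
have [d1 [v1 [_ f1d1 a1n0 line1 van1]]] := sl2_top_line T1 f1n0 Eh1 Ef1.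
have [d2 [v2 [d2gt0 f2d2 a2n0 line2 van2]]] := sl2_top_line T2 f2n0 Eh2 Ef2.
set P1 := f1 ^+ d1 in a1n0 line1 van1 *; set P2 := f2 ^+ d2 in a2n0 line2 van2 *.
set a1 := P1 *m v1 in a1n0 line1 *; set a2 := P2 *m v2 in a2n0 line2 *.
have h2P1 : h2 * P1 = 0.
  by apply: (sl2_triple_kills_line T2 _ _ a1n0 line1); apply: commrX.
have f1P2 : f1 * P2 = 0.
  by apply: (nilpotent_comm_kills_line _ f1d1 a2n0 line2); apply/commrX/esym.
have h2a1 : h2 *m a1 = 0 *: a1 by rewrite scale0r -mulmx_mulr h2P1 mul0mx.
have h2a2 : h2 *m a2 = - d2%:R *: a2.
  by rewrite -mulmx_mulr (sl2_triple_top_weight T2 f2d2) scaleNr mulNmx scalemxAl.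
have d2n0 : d2%:R != 0 :> R by rewrite pnatr_eq0 -lt0n.
have a12_free : free [:: a1; a2].
  by apply: (free_eigen2 h2a1 h2a2) => //; rewrite eq_sym oppr_eq0.
have w12 : wedge a1 a2 = 0.
  have f1a2 : f1 *m a2 = 0 by rewrite -mulmx_mulr f1P2 mul0mx.
  have P1h2 : P1 *m h2 = 0 by rewrite mulmxE -(commrX d1 ch) h2P1.
  have : wedge a1 a2 *m h2 = 0.
    by rewrite /a1 (wedge_exprl Ef1 f1a2) -scalemxAl -mulmxA P1h2 mulmx0 scaler0.
  rewrite (wedge_weight Eh2 h2a1 h2a2) add0r opprK => /eqP.
  by rewrite scaler_eq0 (negbTE d2n0) => /eqP.
exact: wedge_nonvanishing_free a12_free (van1 _ _) w12 (van2 _ _).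
Qed.

End EquivariantWedge.

Definition sl2_e {K : fieldType} : 'M[K]_2 := delta_mx 0 1.
Definition sl2_f {K : fieldType} : 'M[K]_2 := delta_mx 1 0.
Definition sl2_h {K : fieldType} : 'M[K]_2 := delta_mx 0 0 - delta_mx 1 1.

Lemma mxtrace2 (K : fieldType) (A : 'M[K]_2) : \tr A = A 0 0 + A 1 1.
Proof.
by rewrite /mxtrace !big_ord_recl big_ord0 addr0; congr (A _ _ + A _ _); apply: val_inj.
Qed.

Lemma sl2_e_sl2 {K : fieldType} : sl2 (@sl2_e K). Proof. by rewrite /sl2 mxtrace2 !mxE /= addr0. Qed.
Lemma sl2_f_sl2 {K : fieldType} : sl2 (@sl2_f K). Proof. by rewrite /sl2 mxtrace2 !mxE /= addr0. Qed.
Lemma sl2_h_sl2 {K : fieldType} : sl2 (@sl2_h K). Proof. by rewrite /sl2 mxtrace2 !mxE /= subr0 sub0r subrr. Qed.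

Lemma sl2_comm_he {K : fieldType} : mxcomm (@sl2_h K) sl2_e = 2%:R *: sl2_e.
Proof.
rewrite /mxcomm mulmxBl mulmxBr !mul_delta_mx_cond /=.
by rewrite !mulr0n !mulr1n subr0 sub0r opprK scaler_nat mulr2n.
Qed.

Lemma sl2_comm_hf {K : fieldType} : mxcomm (@sl2_h K) sl2_f = - (2%:R *: sl2_f).
Proof.
rewrite /mxcomm mulmxBl mulmxBr !mul_delta_mx_cond /=.
by rewrite !mulr0n !mulr1n subr0 sub0r scaler_nat mulr2n opprD.
Qed.

Lemma sl2_comm_ef {K : fieldType} : mxcomm (@sl2_e K) sl2_f = sl2_h.
Proof. by rewrite /mxcomm !mul_delta_mx. Qed.

Lemma sl2_f_neq0 {K : fieldType} : (@sl2_f K) != 0.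
Proof. by apply/eqP => /matrixP/(_ 1 0)/eqP; rewrite !mxE /= oner_eq0. Qed.

Lemma sl2_triple_of_hom (R : numFieldType) n (G : 'M[R]_2 -> 'M[R]_n.+1) :
  (forall a A, G (a *: A) = a *: G A) ->
  (forall A B, sl2 A -> sl2 B -> G (mxcomm A B) = G A *m G B - G B *m G A) ->
  sl2_triple (G sl2_e) (G sl2_h) (G sl2_f).
Proof.
move=> GZ Gbr.
have Gcomm A B : sl2 A -> sl2 B -> G A * G B - G B * G A = G (mxcomm A B).
  by move=> sA sB; rewrite Gbr.
split; rewrite Gcomm ?sl2_e_sl2 ?sl2_f_sl2 ?sl2_h_sl2 //.
- by rewrite sl2_comm_he GZ.
- by rewrite sl2_comm_hf -scaleN1r GZ scaleN1r GZ.
- by rewrite sl2_comm_ef.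
Qed.

Lemma sl2sl2_embedding_swap (K : fieldType) (V : vectType K) (br : V -> V -> V)
    (phi1 phi2 : 'M[K]_2 -> V) :
  sl2sl2_embedding br phi1 phi2 -> sl2sl2_embedding br phi2 phi1.
Proof.
case=> lin1 lin2 hom inj; split=> // [A B C D sA sB sC sD | A C sA sC].
  by rewrite addrC hom //; congr br; rewrite addrC.
by rewrite addrC => /inj [] // -> ->.
Qed.

Section EmbeddedSl2.
Variables (K : fieldType) (V : vectType K) (br : V -> V -> V) (n : nat).
Variables (rho : V -> 'M[K]_n) (phi1 phi2 : 'M[K]_2 -> V).
Hypotheses (rho_rep : lie_rep br rho) (emb : sl2sl2_embedding br phi1 phi2).

Let phi1_0 : phi1 0 = 0. Proof. by case: emb => lin1 *; exact: comb_lin0 lin1. Qed.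
Let phi2_0 : phi2 0 = 0. Proof. by case: emb => _ lin2 *; exact: comb_lin0 lin2. Qed.
Let rho_0 : rho 0 = 0. Proof. by case: rho_rep => lin _; exact: comb_lin0 lin. Qed.
Let sl2_0 : sl2 (0 : 'M[K]_2). Proof. by rewrite /sl2 mxtrace0. Qed.
Let mxcomm_0 : mxcomm (0 : 'M[K]_2) 0 = 0. Proof. by rewrite /mxcomm mul0mx subrr. Qed.

Lemma emb_scalable a A : rho (phi1 (a *: A)) = a *: rho (phi1 A).
Proof.
have [lin1 _ _ _] := emb; have [lin _] := rho_rep.
by rewrite (comb_linZ lin1) (comb_linZ lin).
Qed.

Lemma emb_bracket A B : sl2 A -> sl2 B ->
  rho (phi1 (mxcomm A B)) = rho (phi1 A) *m rho (phi1 B) - rho (phi1 B) *m rho (phi1 A).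
Proof.
move=> sA sB; have [_ _ hom _] := emb; have [_ rho_br] := rho_rep.
by move: (hom A B 0 0 sA sB sl2_0 sl2_0); rewrite mxcomm_0 phi2_0 !addr0 => ->.
Qed.

Lemma emb_commute A C : sl2 A -> sl2 C ->
  rho (phi1 A) *m rho (phi2 C) = rho (phi2 C) *m rho (phi1 A).
Proof.
move=> sA sC; have [_ _ hom _] := emb; have [_ rho_br] := rho_rep.
move: (hom A 0 0 C sA sl2_0 sl2_0 sC).
rewrite /mxcomm !mulmx0 !mul0mx subrr phi1_0 phi2_0 !addr0 add0r => /(congr1 rho).
by rewrite rho_br rho_0 => /esym/eqP; rewrite subr_eq0 => /eqP.
Qed.

Hypothesis rho_faithful : faithful rho.

Lemma emb_neq0 A : sl2 A -> A != 0 -> rho (phi1 A) != 0.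
Proof.
move=> sA; apply: contraNneq => /eqP; rewrite -rho_0 => /eqP/rho_faithful phiA0.
have [_ _ _ inj] := emb.
have phi0 : phi1 A + phi2 0 = 0 by rewrite phiA0 phi2_0 addr0.
by have [-> _] := inj A 0 sA sl2_0 phi0.
Qed.

End EmbeddedSl2.

Unset Implicit Arguments.

Theorem lemma5p4 (R : rcfType) (V : vectType R) (br : V -> V -> V)
  (n : nat) (rho : V -> 'M[R]_n) (wedge : 'cV[R]_n -> 'cV[R]_n -> 'rV[R]_n) :
  lie_bracket br -> lie_semisimple br ->
  lie_rep br rho -> faithful rho ->
  sym_equiv_wedge rho wedge -> nonvanishing_on_planes wedge ->
  ~ has_sl2sl2_subalgebra br.
Proof.
move=> _ _ rep faith [wlin wsym weq] nv [phi1 [phi2 emb]].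
have emb' := sl2sl2_embedding_swap emb.
have f1n0 := emb_neq0 rep emb faith sl2_f_sl2 sl2_f_neq0.
have f2n0 := emb_neq0 rep emb' faith sl2_f_sl2 sl2_f_neq0.
case: n => [|n] in rho wedge rep faith wlin wsym weq nv emb emb' f1n0 f2n0 *.
  by move: f1n0; rewrite [rho _]thinmx0 eqxx.
have T1 := sl2_triple_of_hom (emb_scalable rep emb) (emb_bracket rep emb).
have T2 := sl2_triple_of_hom (emb_scalable rep emb') (emb_bracket rep emb').
have eqv X : wedge_equivariant wedge (rho X) by move=> a b; exact: weq.
have comm C : sl2 C -> rho (phi2 C) * rho (phi1 sl2_f) = rho (phi1 sl2_f) * rho (phi2 C).
  by move=> sC; exact: esym (emb_commute rep emb sl2_f_sl2 sC).
exact: (no_commuting_sl2_triples wlin wsym nv T1 T2 f1n0 f2n0 (eqv _) (eqv _) (eqv _)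
  (eqv _) (comm _ sl2_e_sl2) (comm _ sl2_h_sl2) (comm _ sl2_f_sl2)).
Qed.
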